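(* Let $\{X_i\}_{i\ge1}$ be independent, identically distributed random variables on $((0,1),\mathcal{B},\mathcal{L})$, each exponentially distributed with rate $1$. For $t\ge1$ let $[t]_E=2k$ if $2k-1\le t<2k+1$, $k\in\mathbb{N}$. Define $D_1=[\exp(X_1)]_E$ and $D_{n+1}=\left[\frac{(D_n-1)(D_n+1)}{D_n}\exp(X_{n+1})\right]_E$ for $n\in\mathbb{N}$. Then $\{D_n\}_{n\ge1}$ is a time-homogeneous Markov chain with $\mathcal{L}(D_1=2k)=\frac{2}{(2k-1)(2k+1)}$ for $k\in\mathbb{N}$ and, for $k,l\in\mathbb{N}$ with $l\ge k$, $$\mathcal{L}(D_{n+1}=2l\mid D_n=2k)=\begin{cases}\frac{1}{2k},& l=k,\\ \frac{(2k-1)(2k+1)}{k(2l-1)(2l+1)},& l\ge k+1.\end{cases}$$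
   Context: $\mathcal{B}$ denotes the Borel $\sigma$-algebra of $(0,1)$ and $\mathcal{L}$ Lebesgue measure. *)

From HB Require Import structures.
From mathcomp Require Import all_boot all_order all_algebra.
From mathcomp Require Import all_classical all_reals all_analysis.
Set Implicit Arguments. Unset Strict Implicit. Unset Printing Implicit Defensive.
Import Order.TTheory GRing.Theory Num.Theory.
Local Open Scope classical_set_scope.
Local Open Scope ring_scope.

Definition Lprob (R : realType) (A : set R) : R :=
  fine (lebesgue_measure (A `&` (`]0%R, 1%R[%classic : set R))).

Definition Lcond (R : realType) (A B : set R) : R :=
  Lprob (A `&` B) / Lprob B.

Definition rv (R : realType) (Y : R -> R) : Prop :=
  measurable_fun (`]0%R, 1%R[%classic : set R) Y.

Definition indep_rvs (R : realType) (X : nat -> R -> R) : Prop :=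
  forall (s : seq nat) (B : nat -> set R),
    uniq s -> (forall i, i \in s -> measurable (B i)) ->
    Lprob [set w | forall i, i \in s -> B i (X i w)] =
    \prod_(i <- s) Lprob (X i @^-1` B i).

Definition exp1_distributed (R : realType) (Y : R -> R) : Prop :=
  forall x : R, Lprob [set w | Y w <= x] =
    (if 0 <= x then 1 - expR (- x) else 0).

(* [t]_E = 2k if 2k-1 <= t < 2k+1 (meaningful for t >= 1) *)
Definition evenE (R : realType) (t : R) : R :=
  2 * (Num.floor ((t + 1) / 2))%:~R.

(* D n = D_{n+1} of the paper (0-based): X 0 = X_1, X n = X_{n+1} *)
Fixpoint Dseq (R : realType) (X : nat -> R -> R) (n : nat) (w : R) : R :=
  match n with
  | 0 => evenE (expR (X 0%N w))
  | m.+1 => let d := Dseq X m w in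
            evenE ((d - 1) * (d + 1) / d * expR (X m.+1 w))
  end.

Definition markov_chain (R : realType) (D : nat -> R -> R) : Prop :=
  forall (n : nat) (s : nat -> R),
    0 < Lprob [set w | forall i, (i <= n)%N -> D i w = s i] ->
    Lcond [set w | D n.+1 w = s n.+1]
          [set w | forall i, (i <= n)%N -> D i w = s i] =
    Lcond [set w | D n.+1 w = s n.+1] [set w | D n w = s n].

Definition time_homogeneous (R : realType) (D : nat -> R -> R) : Prop :=
  forall (n m : nat) (a b : R),
    0 < Lprob [set w | D n w = a] -> 0 < Lprob [set w | D m w = a] ->
    Lcond [set w | D n.+1 w = b] [set w | D n w = a] =
    Lcond [set w | D m.+1 w = b] [set w | D m w = a].

From HB Require Import structures.
From mathcomp Require Import all_boot all_order all_algebra.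
From mathcomp Require Import all_classical all_reals all_analysis.
From mathcomp Require Import ring lra measurable_realfun.
Import Order.TTheory GRing.Theory Num.Theory.
Local Open Scope classical_set_scope.
Local Open Scope ring_scope.
Set Implicit Arguments. Unset Strict Implicit.

(* On {D_n = a}, D_{n+1} = b holds exactly when X_{n+1} lies in the Borel set
   {x | [g(a) e^x]_E = b}, g(d) = (d-1)(d+1)/d.  D_n is a function of
   X_1, ..., X_n, so by independence the probability of this event given the
   whole history is P(X_{n+1} in that set), which depends on a and b only: this
   gives both the Markov property and time homogeneity.  The level sets of
   [.]_E are the intervals [b-1, b+1), and for Y exponential and c > 0 the
   variable c e^Y is Pareto, P(c e^Y < t) = 1 - c/t for t >= c, which yields
   the explicit transition probabilities.  Independence of {D_n = a} from the
   later coordinates is proved by induction on n, splitting {D_n = a} along the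
   values of D_{n-1}, which almost surely is a positive even integer <= D_n. *)

Section LebesgueProbability.
Variable R : realType.
Local Notation I := (`]0%R, 1%R[%classic : set R).
Local Notation mu := (@lebesgue_measure R).
Local Notation P := (@Lprob R).

Definition Lmeasurable (A : set R) := measurable (A `&` I).

Lemma Lmeasurable_preimage (Y : R -> R) S :
  rv Y -> measurable S -> Lmeasurable (Y @^-1` S).
Proof. by move=> mY mS; rewrite /Lmeasurable setIC; exact: mY. Qed.

Lemma LmeasurableT : Lmeasurable setT.
Proof. by rewrite /Lmeasurable setTI. Qed.

Lemma LmeasurableU A B : Lmeasurable A -> Lmeasurable B -> Lmeasurable (A `|` B).
Proof. by move=> mA mB; rewrite /Lmeasurable setIUl; exact: measurableU. Qed.

Lemma LmeasurableI A B : Lmeasurable A -> Lmeasurable B -> Lmeasurable (A `&` B).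
Proof.
move=> mA mB; rewrite /Lmeasurable -[I]setIid setIACA.
exact: measurableI.
Qed.

Lemma LmeasurableC A : Lmeasurable A -> Lmeasurable (~` A).
Proof.
move=> mA; rewrite /Lmeasurable -[~` A `&` I]set0U -(setICl I) -setIUl setUC.
by rewrite -setCI setIC -setDE; exact: measurableD.
Qed.

Lemma Lprob_EFin A : Lmeasurable A -> mu (A `&` I) = (P A)%:E.
Proof.
move=> mA; rewrite /Lprob fineK // ge0_fin_numE ?measure_ge0 //.
apply: (@le_lt_trans _ _ (mu I)); last first.
  by rewrite lebesgue_measure_itv /= lte_fin ltr01 oppr0 adde0 ltry.
by apply: le_measure; rewrite ?inE //; exact: subIsetr.
Qed.

Lemma Lprob_ge0 A : 0 <= P A.
Proof. by rewrite fine_ge0 // measure_ge0. Qed.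

Lemma Lprob0 : P set0 = 0.
Proof. by rewrite /Lprob set0I measure0. Qed.

Lemma LprobT : P setT = 1.
Proof.
by rewrite /Lprob setTI lebesgue_measure_itv /= lte_fin ltr01 oppr0 adde0.
Qed.

Lemma Lprob_le A B : Lmeasurable A -> Lmeasurable B -> A `<=` B -> P A <= P B.
Proof.
move=> mA mB AB; rewrite -lee_fin -!Lprob_EFin //.
by apply: le_measure; rewrite ?inE //; exact: setSI.
Qed.

Lemma LprobU A B : Lmeasurable A -> Lmeasurable B -> A `&` B = set0 ->
  P (A `|` B) = P A + P B.
Proof.
move=> mA mB AB; apply: EFin_inj; rewrite EFinD -!Lprob_EFin //; last exact: LmeasurableU.
by rewrite setIUl measureU // setIACA AB set0I.
Qed.

Lemma LprobU_le A B : Lmeasurable A -> Lmeasurable B -> P (A `|` B) <= P A + P B.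
Proof.
move=> mA mB; rewrite -lee_fin EFinD -!Lprob_EFin //; last exact: LmeasurableU.
by rewrite setIUl; exact: measureU2.
Qed.

Lemma LprobC A : Lmeasurable A -> P (~` A) = 1 - P A.
Proof.
move=> mA; have := LprobU mA (LmeasurableC mA) (setICr A).
by rewrite setUv LprobT => ->; rewrite addrC addKr.
Qed.

Lemma LprobD A B : Lmeasurable A -> Lmeasurable B -> B `<=` A ->
  P (A `\` B) = P A - P B.
Proof.
move=> mA mB BA; apply/eqP; rewrite eq_sym subr_eq; apply/eqP.
have mAB : Lmeasurable (A `\` B) by rewrite setDE; apply: LmeasurableI => //; exact: LmeasurableC.
rewrite -LprobU //; last by rewrite setIC setDIK.
by rewrite setUC setDUK.
Qed.

Lemma Lprob_preimage_setD (Y : R -> R) A B : rv Y -> measurable A -> measurable B ->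
  B `<=` A -> P (Y @^-1` (A `\` B)) = P (Y @^-1` A) - P (Y @^-1` B).
Proof.
move=> Yrv mA mB BA; apply: LprobD; try exact: Lmeasurable_preimage.
exact: preimage_subset.
Qed.

Lemma Lprob_null_subset A N : Lmeasurable A -> Lmeasurable N -> P N = 0 ->
  A `<=` N -> P A = 0.
Proof.
move=> mA mN N0 AN; apply/eqP; rewrite eq_le Lprob_ge0 andbT -N0.
exact: Lprob_le.
Qed.

Lemma Lprob_nullU A B : Lmeasurable A -> Lmeasurable B -> P A = 0 -> P B = 0 ->
  P (A `|` B) = 0.
Proof.
move=> mA mB A0 B0; apply/eqP; rewrite eq_le Lprob_ge0 andbT.
by rewrite (le_trans (LprobU_le mA mB)) // A0 B0 addr0.
Qed.

Lemma Lprob_eq_null A B N : Lmeasurable A -> Lmeasurable B -> Lmeasurable N ->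
  P N = 0 -> B `<=` A -> A `<=` B `|` N -> P A = P B.
Proof.
move=> mA mB mN N0 BA ABN; apply/eqP; rewrite eq_le (Lprob_le mB mA BA) andbT.
apply: le_trans (Lprob_le mA (LmeasurableU mB mN) ABN) _.
by rewrite (le_trans (LprobU_le mB mN)) // N0 addr0.
Qed.

Lemma Lmeasurable_bigsetU n (F : nat -> set R) : (forall j, Lmeasurable (F j)) ->
  Lmeasurable (\big[setU/set0]_(j < n) F j).
Proof.
move=> mF; apply: (big_ind Lmeasurable) => //; last exact: LmeasurableU.
by rewrite /Lmeasurable set0I.
Qed.

Lemma Lprob_bigsetU n (F : nat -> set R) : (forall j, Lmeasurable (F j)) ->
  trivIset setT F -> P (\big[setU/set0]_(j < n) F j) = \sum_(j < n) P (F j).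
Proof.
move=> mF tF; apply: EFin_inj; rewrite -sumEFin.
rewrite -Lprob_EFin; last exact: Lmeasurable_bigsetU.
rewrite -bigcup_mkord setI_bigcupl bigcup_mkord.
rewrite (@measure_semi_additive _ _ _ mu (fun j => F j `&` I) n) //.
- by apply: eq_bigr => j _; rewrite -Lprob_EFin.
- move=> i j _ _ [w [[Fiw _] [Fjw _]]]; exact: tF (ex_intro _ w (conj Fiw Fjw)).
- by apply: bigsetU_measurable => j _; exact: mF.
Qed.

End LebesgueProbability.

Section ExponentialLaw.
Variable R : realType.
Local Notation P := (@Lprob R).

Lemma measurable_lt_ray (u : R) : measurable [set y : R | y < u].
Proof. exact: (@measurable_itv R `]-oo, u[). Qed.

Lemma measurable_le_ray (u : R) : measurable [set y : R | y <= u].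
Proof. exact: (@measurable_itv R `]-oo, u]). Qed.

Definition exp1_cdf (u : R) : R := if 0 <= u then 1 - expR (- u) else 0.

Lemma exp1_cdf_increment u d : 0 <= d -> exp1_cdf u - exp1_cdf (u - d) <= expR d - 1.
Proof.
move=> d0; have ed : 1 <= expR d by rewrite -expR0 ler_expR.
rewrite /exp1_cdf; case: ifPn => u0; last first.
  by rewrite ifN ?subrr ?subr_ge0 // -ltNge; move: u0; rewrite -ltNge; lra.
have eu : expR (- u) <= 1 by rewrite -expR0 ler_expR; lra.
have eud : expR (- (u - d)) = expR (- u) * expR d by rewrite -expRD opprB addrC.
have cdf_ge : 1 - expR (- (u - d)) <= exp1_cdf (u - d).
  rewrite /exp1_cdf; case: ifPn => //; rewrite -ltNge => ud.
  by rewrite subr_le0 -expR0 ler_expR; lra.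
move: cdf_ge; rewrite /exp1_cdf eud; have := expR_gt0 (- u); nra.
Qed.

Variable Y : R -> R.
Hypothesis Yrv : rv Y.
Hypothesis Yexp : exp1_distributed Y.

Lemma Lprob_exp1_atom u : P (Y @^-1` [set u]) = 0.
Proof.
have m1 := Lmeasurable_preimage Yrv (measurable_set1 u).
have mle v := Lmeasurable_preimage Yrv (measurable_le_ray v).
apply/eqP; rewrite eq_le Lprob_ge0 andbT; apply/ler_addgt0Pr => e e0.
(* P(Y = u) <= F(u) - F(u - d) <= e^d - 1 = e *)
pose d := ln (1 + e).
have ed : expR d = 1 + e by rewrite lnK // posrE; lra.
have d0 : 0 < d by rewrite ln_gt0 //; lra.
have disj : Y @^-1` [set u] `&` Y @^-1` [set y | y <= u - d] = set0.
  by apply/seteqP; split => w // [/= -> ?]; lra.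
have sub : Y @^-1` [set u] `|` Y @^-1` [set y | y <= u - d] `<=`
           Y @^-1` [set y | y <= u].
  by move=> w /= [->|]; lra.
have := Lprob_le (LmeasurableU m1 (mle _)) (mle _) sub.
rewrite LprobU // !Yexp -!/(exp1_cdf _) add0r => h.
by have := exp1_cdf_increment u (ltW d0); rewrite ed; lra.
Qed.

Lemma Lprob_exp1_lt u : P (Y @^-1` [set y | y < u]) = exp1_cdf u.
Proof.
rewrite -[RHS]Yexp -[LHS]addr0 -(Lprob_exp1_atom u) -LprobU.
- congr Lprob; apply/seteqP; split => w /=; first by case=> [/ltW|->].
  by rewrite le_eqVlt => /orP[/eqP|]; [right|left].
- exact: Lmeasurable_preimage (measurable_lt_ray u).
- exact: Lmeasurable_preimage (measurable_set1 u).
- by apply/seteqP; split => w //= [h1 h2]; move: h1; rewrite h2 ltxx.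
Qed.

Lemma Lprob_exp1_gt u : P (Y @^-1` [set y | u < y]) = 1 - exp1_cdf u.
Proof.
rewrite -[exp1_cdf u]Yexp -LprobC; last exact: Lmeasurable_preimage (measurable_le_ray u).
by congr Lprob; apply/seteqP; split => w /=; rewrite ltNge => /negP.
Qed.

End ExponentialLaw.

Section ScaledExponential.
Variable R : realType.
Local Notation P := (@Lprob R).

Definition pareto_cdf (c t : R) : R := if c <= t then 1 - c / t else 0.

Lemma cexp_lt_ln (c t : R) : 0 < c -> 0 < t ->
  [set x | c * expR x < t] = [set x | x < ln (t / c)].
Proof.
move=> c0 t0; have tc : 0 < t / c by rewrite divr_gt0.
have E x : (x < ln (t / c)) = (c * expR x < t).
  by rewrite -ltr_expR lnK ?posrE // ltr_pdivlMr // mulrC.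
by apply/seteqP; split => x /=; rewrite E.
Qed.

Lemma cexp_gt_ln (c t : R) : c < 0 -> t < 0 ->
  [set x | c * expR x < t] = [set x | ln (t / c) < x].
Proof.
move=> c0 t0; have tc : 0 < t / c by rewrite ltr_ndivlMr // mul0r.
have E x : (ln (t / c) < x) = (c * expR x < t).
  by rewrite -ltr_expR lnK ?posrE // ltr_ndivrMr // mulrC.
by apply/seteqP; split => x /=; rewrite E.
Qed.

Lemma Lprob_exp1_cexp_lt (Y : R -> R) c t : rv Y -> exp1_distributed Y -> 0 < c ->
  P (Y @^-1` [set x | c * expR x < t]) = pareto_cdf c t.
Proof.
move=> Yrv Yexp c0; rewrite /pareto_cdf; have [t0|t0] := leP t 0.
  rewrite ifN; last by rewrite -ltNge; lra.
  rewrite (_ : [set x | c * expR x < t] = set0) ?preimage_set0 ?Lprob0 //.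
  by apply/seteqP; split => x //= h; have := expR_gt0 x; nra.
have tc : 0 < t / c by rewrite divr_gt0.
rewrite cexp_lt_ln // Lprob_exp1_lt // /exp1_cdf -ln1 ler_ln ?posrE //.
rewrite ler_pdivlMr // mul1r; case: ifPn => // _.
by rewrite expRN lnK ?posrE // invf_div.
Qed.

Lemma exp1_Lprob_cexp_lt (Y Z : R -> R) c t :
  rv Y -> exp1_distributed Y -> rv Z -> exp1_distributed Z ->
  P (Y @^-1` [set x | c * expR x < t]) = P (Z @^-1` [set x | c * expR x < t]).
Proof.
move=> Yrv Yexp Zrv Zexp; have [c0|c0|->] := ltgtP c 0.
- have [t0|t0] := leP 0 t; last by rewrite cexp_gt_ln // !Lprob_exp1_gt.
  rewrite (_ : [set _ | _] = setT) //; apply/seteqP; split => x //= _.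
  by have := expR_gt0 x; nra.
- by rewrite !Lprob_exp1_cexp_lt.
- under eq_set do rewrite mul0r.
  have [t0|t0] := ltP 0 t.
  + by rewrite (_ : [set _ | _] = setT) //; apply/seteqP; split.
  + by rewrite (_ : [set _ | _] = set0) //; apply/seteqP; split => x //=; lra.
Qed.

End ScaledExponential.

Section EvenRounding.
Variable R : realType.
Local Notation P := (@Lprob R).

Lemma evenE_eq (t b : R) : evenE t = b <->
  exists z : int, b = 2 * z%:~R /\ b - 1 <= t < b + 1.
Proof.
split=> [<-|[z [-> /andP[t_ge t_lt]]]].
  exists (Num.floor ((t + 1) / 2)); split => //.
  have /andP[] := floor_itv ((t + 1) / 2); rewrite intrD /=.
  by rewrite /evenE; set f := ((Num.floor _)%:~R : R) => h1 h2; apply/andP; split; lra.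
rewrite /evenE; congr (_ * _); congr intr.
by apply/eqP; rewrite floor_eq intrD; apply/andP; split; rewrite ?ler_pdivlMr ?ltr_pdivrMr //=; lra.
Qed.

Lemma evenE_ge (t : R) (z : int) : 2 * z%:~R - 1 <= t -> 2 * z%:~R <= evenE t.
Proof. by move=> h; rewrite /evenE ler_pM2l // ler_int floor_ge_int; lra. Qed.

Lemma evenE_nondecreasing : {homo @evenE R : x y / x <= y}.
Proof.
move=> x y xy; rewrite /evenE ler_pM2l // ler_int le_floor //.
by rewrite ler_pM2r // lerD2r.
Qed.

Lemma measurable_evenE : measurable_fun setT (@evenE R).
Proof. exact: nondecreasing_measurable evenE_nondecreasing. Qed.

Definition even_level (c b : R) := [set x : R | evenE (c * expR x) = b].

Lemma measurable_even_level c b : measurable (even_level c b).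
Proof.
have mf : measurable_fun setT (fun x : R => evenE (c * expR x)).
  apply: (measurableT_comp measurable_evenE).
  by apply: measurable_funM => //; exact: measurable_expR.
by rewrite -[even_level c b]setTI; exact: (mf measurableT _ (measurable_set1 b)).
Qed.

Lemma measurable_cexp_lt (c t : R) : measurable [set x : R | c * expR x < t].
Proof.
have mf : measurable_fun setT (fun x : R => c * expR x).
  by apply: measurable_funM => //; exact: measurable_expR.
by rewrite -[X in measurable X]setTI; exact: (mf measurableT _ (measurable_lt_ray t)).
Qed.

Lemma even_level_split (c b : R) (z : int) : b = 2 * z%:~R ->
  even_level c b = [set x | c * expR x < b + 1] `\` [set x | c * expR x < b - 1].
Proof.
move=> bz; apply/seteqP; split => x /=.
  by move/evenE_eq => [_ [_ /andP[h1 h2]]]; split => //; lra.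
by move=> [h1 h2]; apply/evenE_eq; exists z; split => //; apply/andP; split; lra.
Qed.

Lemma even_level_not_even (c b : R) : (forall z : int, b != 2 * z%:~R) ->
  even_level c b = set0.
Proof.
move=> nb; apply/seteqP; split => x //= /evenE_eq [z [bz _]].
by have := nb z; rewrite bz eqxx.
Qed.

Lemma natr_double (n : nat) : (2 * n)%:R = 2 * (n%:Z)%:~R :> R.
Proof. by rewrite natrM. Qed.

Lemma Lprob_exp1_even_level (Y : R -> R) c b (z : int) :
  rv Y -> exp1_distributed Y -> 0 < c -> b = 2 * z%:~R ->
  P (Y @^-1` even_level c b) = pareto_cdf c (b + 1) - pareto_cdf c (b - 1).
Proof.
move=> Yrv Yexp c0 bz.
have sub : [set x | c * expR x < b - 1] `<=` [set x | c * expR x < b + 1].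
  by move=> x /=; lra.
rewrite (even_level_split _ bz).
rewrite (Lprob_preimage_setD Yrv (measurable_cexp_lt _ _) (measurable_cexp_lt _ _) sub).
by rewrite !Lprob_exp1_cexp_lt.
Qed.

Lemma exp1_Lprob_even_level (Y Z : R -> R) c b :
  rv Y -> exp1_distributed Y -> rv Z -> exp1_distributed Z ->
  P (Y @^-1` even_level c b) = P (Z @^-1` even_level c b).
Proof.
move=> Yrv Yexp Zrv Zexp.
have [[z bz]|] := pselect (exists z : int, b = 2 * z%:~R); last first.
  by move=> nb; rewrite even_level_not_even // => z; apply/eqP => bz; apply: nb; exists z.
have sub : [set x | c * expR x < b - 1] `<=` [set x | c * expR x < b + 1].
  by move=> x /=; lra.
have mS t := measurable_cexp_lt c t.
rewrite (even_level_split _ bz) !(Lprob_preimage_setD _ (mS _) (mS _) sub) //.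
by rewrite !(exp1_Lprob_cexp_lt _ _ Yrv Yexp Zrv Zexp).
Qed.

End EvenRounding.

Section TransitionLaw.
Variable R : realType.
Local Notation P := (@Lprob R).

Definition dfactor (d : R) := (d - 1) * (d + 1) / d.

Lemma measurable_inv : measurable_fun setT (@GRing.inv R).
Proof.
rewrite -(setvU [set (0:R)]); apply/measurable_funU => //; first exact: measurableC.
split; last exact: measurable_fun_set1.
apply: open_continuous_measurable_fun.
  exact/closed_openC/accessible_closed_set1/hausdorff_accessible/Rhausdorff.
by move=> x; rewrite inE /= => x0; apply: inv_continuous; exact/eqP.
Qed.

Lemma measurable_dfactor : measurable_fun setT dfactor.
Proof.
apply: measurable_funM; last exact: measurable_inv.
by apply: measurable_funM; [exact: measurable_funB|exact: measurable_funD].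
Qed.

Lemma dfactor_ge (d : R) : 2 <= d -> d - 1 <= dfactor d.
Proof.
move=> d2; have -> : dfactor d = d - d^-1 by rewrite /dfactor; field; lra.
suff : d^-1 <= 1 by lra.
by rewrite invf_le1; lra.
Qed.

Lemma pareto_cdf_ge (c t : R) : c <= t -> pareto_cdf c t = 1 - c / t.
Proof. by rewrite /pareto_cdf => ->. Qed.

Lemma pareto_cdf_lt (c t : R) : t < c -> pareto_cdf c t = 0.
Proof. by rewrite /pareto_cdf ltNge => /negbTE ->. Qed.

Lemma Lprob_exp1_even_level_init (Y : R -> R) k : rv Y -> exp1_distributed Y -> (0 < k)%N ->
  P (Y @^-1` even_level 1 (2 * k)%:R) = 2 / (((2 * k)%:R - 1) * ((2 * k)%:R + 1)).
Proof.
move=> Yrv Yexp k0; have k1 : (1 : R) <= k%:R by rewrite ler1n.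
rewrite (Lprob_exp1_even_level Yrv Yexp ltr01 (natr_double R k)) natrM.
rewrite !pareto_cdf_ge; try lra.
by field; apply/andP; split; apply/eqP; lra.
Qed.

Lemma Lprob_exp1_even_level_dfactor (Y : R -> R) k l :
  rv Y -> exp1_distributed Y -> (0 < k)%N -> (k <= l)%N ->
  P (Y @^-1` even_level (dfactor (2 * k)%:R) (2 * l)%:R) =
   (if l == k then 1 / (2 * k)%:R
    else ((2 * k)%:R - 1) * ((2 * k)%:R + 1) /
         (k%:R * ((2 * l)%:R - 1) * ((2 * l)%:R + 1))).
Proof.
move=> Yrv Yexp k0 kl.
have k1 : (1 : R) <= k%:R by rewrite ler1n.
have kl' : (k%:R : R) <= l%:R by rewrite ler_nat.
have c_eq : dfactor (2 * k)%:R = 2 * k%:R - (2 * k%:R)^-1.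
  by rewrite /dfactor natrM; field; lra.
have ki : 0 < (2 * k%:R : R)^-1 <= 1 / 2.
  by rewrite invr_gt0 -div1r ler_pdivrMr ?mul1r; lra.
have c0 : 0 < dfactor (2 * k)%:R by rewrite c_eq; lra.
rewrite (Lprob_exp1_even_level Yrv Yexp c0 (natr_double R l)) c_eq !natrM.
rewrite pareto_cdf_ge; last lra.
case: eqP => [->|/eqP lk].
  by rewrite pareto_cdf_lt ?subr0; [field; lra | lra].
have kl1 : (k%:R : R) + 1 <= l%:R by rewrite natr1 ler_nat ltn_neqAle eq_sym lk.
rewrite pareto_cdf_ge; last lra.
by field; apply/and3P; split; apply/eqP; lra.
Qed.

End TransitionLaw.

Section EvenChain.
Variable R : realType.
Local Notation P := (@Lprob R).
Variable X : nat -> R -> R.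
Hypothesis Xrv : forall i, rv (X i).
Hypothesis Xind : indep_rvs X.
Hypothesis Xexp : forall i, exp1_distributed (X i).
Local Notation D := (Dseq X).
Local Notation Dlevel n a := [set w | Dseq X n w = a].

Lemma Dseq_succ n w : D n.+1 w = evenE (dfactor (D n w) * expR (X n.+1 w)).
Proof. by []. Qed.

Lemma Dlevel0 a : Dlevel 0 a = X 0 @^-1` even_level 1 a.
Proof. by apply/seteqP; split => w; rewrite /even_level /preimage /= mul1r. Qed.

Lemma Dlevel_succ_cap n a b :
  Dlevel n.+1 b `&` Dlevel n a = X n.+1 @^-1` even_level (dfactor a) b `&` Dlevel n a.
Proof. by apply/seteqP; split => w /= [<- an]; rewrite an. Qed.

Lemma rv_Dseq n : rv (D n).
Proof.
elim: n => [|n IH].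
  rewrite (_ : D 0 = @evenE R \o (expR \o X 0)) //.
  apply: measurableT_comp; first exact: measurable_evenE.
  by apply: measurableT_comp; [exact: measurable_expR|exact: Xrv].
rewrite (_ : D n.+1 = @evenE R \o ((@dfactor R \o D n) \* (expR \o X n.+1))) //.
apply: measurableT_comp; first exact: measurable_evenE.
apply: measurable_funM.
  by apply: measurableT_comp; [exact: measurable_dfactor|exact: IH].
by apply: measurableT_comp; [exact: measurable_expR|exact: Xrv].
Qed.

Lemma Lmeasurable_Dlevel n a : Lmeasurable (Dlevel n a).
Proof. exact: Lmeasurable_preimage (rv_Dseq n) (measurable_set1 a). Qed.

Lemma Dseq_pos_even n w : 0 < D n w -> exists j : nat, D n w = (2 * j.+1)%:R.
Proof.
have [z ->] : exists z : int, D n w = 2 * z%:~R by case: n => *; eexists.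
case: z => [[|j]|j] /=.
- by rewrite mulr0 ltxx.
- by exists j; rewrite natrM.
- move=> h; exfalso; suff : (Negz j)%:~R < 0 :> R by lra.
  by rewrite ltrz0.
Qed.

Lemma Dseq_le_succ n w : 0 < D n w -> 0 < X n.+1 w -> D n w <= D n.+1 w.
Proof.
move=> /Dseq_pos_even [j dj] x0.
have d2 : 2 <= D n w by rewrite dj ler_nat mulnS leq_addr.
have e1 : 1 <= expR (X n.+1 w) by rewrite -expR0 ler_expR ltW.
have fd := dfactor_ge d2.
rewrite Dseq_succ dj (natr_double R j.+1); apply: evenE_ge.
rewrite -natr_double -dj.
have f0 : 0 <= dfactor (D n w) by lra.
by have := ler_peMr f0 e1; lra.
Qed.

Lemma Lprob_X_le0 i : P [set w | X i w <= 0] = 0.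
Proof. by rewrite Xexp lexx oppr0 expR0 subrr. Qed.

Lemma Lmeasurable_X_le0 i : Lmeasurable [set w | X i w <= 0].
Proof. exact: Lmeasurable_preimage (Xrv i) (measurable_le_ray 0). Qed.

Lemma Lmeasurable_Dseq_le0 n : Lmeasurable [set w | D n w <= 0].
Proof. exact: Lmeasurable_preimage (rv_Dseq n) (measurable_le_ray 0). Qed.

Lemma Lprob_Dseq_le0 n : P [set w | D n w <= 0] = 0.
Proof.
elim: n => [|n IH].
  apply: Lprob_null_subset (Lmeasurable_Dseq_le0 0) (Lmeasurable_X_le0 0) (Lprob_X_le0 0) _.
  move=> w /= D0; rewrite leNgt; apply/negP => x0.
  have e1 : 1 < expR (X 0 w) by rewrite expR_gt1.
  suff : 2 <= evenE (expR (X 0 w)) by lra.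
  by have := @evenE_ge R (expR (X 0 w)) 1; rewrite mulr1; apply; lra.
have mN := LmeasurableU (Lmeasurable_Dseq_le0 n) (Lmeasurable_X_le0 n.+1).
have N0 := Lprob_nullU (Lmeasurable_Dseq_le0 n) (Lmeasurable_X_le0 n.+1) IH (Lprob_X_le0 _).
apply: Lprob_null_subset (Lmeasurable_Dseq_le0 _) mN N0 _.
move=> w /= D0; have [Dn0|Dn0] := leP (D n w) 0; first by left.
have [Xn0|Xn0] := leP (X n.+1 w) 0; first by right.
by have := Dseq_le_succ Dn0 Xn0; rewrite Dseq_succ; lra.
Qed.

Definition cylinder (s : seq nat) (B : nat -> set R) :=
  [set w | forall i, i \in s -> B i (X i w)].

Lemma cylinder_nil B : cylinder [::] B = setT.
Proof. by apply/seteqP; split => w // _ i; rewrite in_nil. Qed.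

Lemma cylinder_cons i s B : cylinder (i :: s) B = X i @^-1` B i `&` cylinder s B.
Proof.
apply/seteqP; split => w /=.
  by move=> h; split => [|j js]; apply: h; rewrite in_cons ?eqxx ?js ?orbT.
by move=> [h1 h2] j; rewrite in_cons => /orP[/eqP ->|/h2].
Qed.

Lemma cylinder_cons_update i0 A s B : i0 \notin s ->
  cylinder (i0 :: s) (fun i => if i == i0 then A else B i) = X i0 @^-1` A `&` cylinder s B.
Proof.
move=> i0s; rewrite cylinder_cons eqxx; congr (_ `&` _).
apply/seteqP; split => w /= h i si; have := h i si;
  by case: eqP => // ii0; move: i0s; rewrite -ii0 si.
Qed.

Lemma Lmeasurable_cylinder s B : (forall i, i \in s -> measurable (B i)) ->
  Lmeasurable (cylinder s B).
Proof.
elim: s => [|i s IH] mB; first by rewrite cylinder_nil; exact: LmeasurableT.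
rewrite cylinder_cons; apply: LmeasurableI.
  by apply: Lmeasurable_preimage => //; apply: mB; rewrite mem_head.
by apply: IH => j js; apply: mB; rewrite in_cons js orbT.
Qed.

Lemma Lprob_cylinder s B : uniq s -> (forall i, i \in s -> measurable (B i)) ->
  P (cylinder s B) = \prod_(i <- s) P (X i @^-1` B i).
Proof. exact: Xind. Qed.

Lemma Lprob_preimage_cylinder i0 A s B : uniq s -> i0 \notin s -> measurable A ->
  (forall i, i \in s -> measurable (B i)) ->
  P (X i0 @^-1` A `&` cylinder s B) = P (X i0 @^-1` A) * P (cylinder s B).
Proof.
move=> us i0s mA mB; rewrite -cylinder_cons_update // Lprob_cylinder /= ?i0s //; last first.
  by move=> i; rewrite in_cons; case: eqP => // _ /mB.
rewrite big_cons eqxx Lprob_cylinder //; congr (_ * _); apply: eq_big_seq => i si.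
by case: eqP => // ii0; move: i0s; rewrite -ii0 si.
Qed.

Lemma Lprob_partition_prev n b A : Lmeasurable A -> A `<=` Dlevel n.+1 b ->
  P A = \sum_(j < Num.truncn b) P (A `&` Dlevel n (2 * j.+1)%:R).
Proof.
move=> mA Ab; pose F j := A `&` Dlevel n (2 * j.+1)%:R.
have mF j : Lmeasurable (F j) by exact: LmeasurableI mA (Lmeasurable_Dlevel _ _).
rewrite -(@Lprob_bigsetU _ _ F) //; last first.
  move=> i j _ _ [w [[_ /= Di] [_ /= Dj]]]; move: Dj; rewrite Di => /eqP.
  by rewrite eqr_nat eqn_pmul2l // eqSS => /eqP.
(* off this null set, D_n is a positive even integer at most D_{n+1} = b *)
have mN := LmeasurableU (Lmeasurable_Dseq_le0 n) (Lmeasurable_X_le0 n.+1).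
have N0 := Lprob_nullU (Lmeasurable_Dseq_le0 n) (Lmeasurable_X_le0 n.+1)
  (Lprob_Dseq_le0 n) (Lprob_X_le0 _).
apply: Lprob_eq_null mA (Lmeasurable_bigsetU _ mF) mN N0 _ _.
- by move=> w; rewrite -bigcup_mkord => -[j _ []].
move=> w Aw; have [Dn0|Dn0] := leP (D n w) 0; first by right; left.
have [Xn0|Xn0] := leP (X n.+1 w) 0; first by right; right.
left; rewrite -bigcup_mkord; have [j Dj] := Dseq_pos_even Dn0.
exists j; last by split.
have := Dseq_le_succ Dn0 Xn0; rewrite (Ab w Aw) Dj /= truncn_gt_nat natrM.
by have := ler0n R j.+1; lra.
Qed.

Lemma Dlevel_indep_cylinder n a s B : uniq s -> (forall i, i \in s -> (n < i)%N) ->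
  (forall i, i \in s -> measurable (B i)) ->
  P (Dlevel n a `&` cylinder s B) = P (Dlevel n a) * P (cylinder s B).
Proof.
elim: n a s B => [|n IH] a s B us sn mB.
  have s0 : 0%N \notin s by apply/negP => /sn.
  by rewrite Dlevel0 Lprob_preimage_cylinder //; exact: measurable_even_level.
pose a_ j : R := (2 * j.+1)%:R.
pose L_ j := even_level (dfactor (a_ j)) a.
have key s' B' : uniq s' -> (forall i, i \in s' -> (n.+1 < i)%N) ->
    (forall i, i \in s' -> measurable (B' i)) ->
    P (Dlevel n.+1 a `&` cylinder s' B') =
    (\sum_(j < Num.truncn a) P (Dlevel n (a_ j)) * P (X n.+1 @^-1` L_ j)) * P (cylinder s' B').
  move=> us' sn' mB'; have ns' : n.+1 \notin s' by apply/negP => /sn'; rewrite ltnn.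
  rewrite (@Lprob_partition_prev n a) ?mulr_suml; first last.
  - exact: subIsetl.
  - exact: LmeasurableI (Lmeasurable_Dlevel _ _) (Lmeasurable_cylinder mB').
  apply: eq_bigr => j _.
  rewrite setIAC Dlevel_succ_cap setIAC setIC -(cylinder_cons_update (L_ j) B' ns').
  rewrite IH //=.
  - rewrite cylinder_cons_update // Lprob_preimage_cylinder ?mulrA //.
    exact: measurable_even_level.
  - by rewrite ns'.
  - by move=> i; rewrite in_cons => /orP[/eqP ->//|/sn' /ltnW].
  - by move=> i; rewrite in_cons; case: eqP => [_ _|_ /mB'//]; exact: measurable_even_level.
have := key [::] B isT (fun i => ltac:(by [])) (fun i => ltac:(by [])).
rewrite cylinder_nil setIT LprobT mulr1 => ->.
exact: key.
Qed.

Lemma cylinder1 i B : cylinder [:: i] B = X i @^-1` B i.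
Proof. by rewrite cylinder_cons cylinder_nil setIT. Qed.

Lemma Lprob_Dlevel_succ_cap n a b : P (Dlevel n.+1 b `&` Dlevel n a) =
  P (Dlevel n a) * P (X n.+1 @^-1` even_level (dfactor a) b).
Proof.
rewrite Dlevel_succ_cap setIC -(cylinder1 n.+1 (fun => even_level (dfactor a) b)).
rewrite Dlevel_indep_cylinder //.
- by move=> i; rewrite mem_seq1 => /eqP ->.
- by move=> i _; exact: measurable_even_level.
Qed.

Lemma Lcond_Dlevel_succ n a b : 0 < P (Dlevel n a) ->
  Lcond (Dlevel n.+1 b) (Dlevel n a) = P (X n.+1 @^-1` even_level (dfactor a) b).
Proof. by move=> Pa; rewrite /Lcond Lprob_Dlevel_succ_cap mulrAC divff ?mul1r // gt_eqF. Qed.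

Lemma Lprob_Dlevel_gt0 n k : (0 < k)%N -> 0 < P (Dlevel n (2 * k)%:R).
Proof.
move=> k0; have k1 : (1 : R) <= k%:R by rewrite ler1n.
elim: n => [|n IH].
  by rewrite Dlevel0 Lprob_exp1_even_level_init // natrM divr_gt0 // mulr_gt0; lra.
have mE m := Lmeasurable_Dlevel m (2 * k)%:R.
apply: (lt_le_trans _ (Lprob_le (LmeasurableI (mE n.+1) (mE n)) (mE n.+1) (@subIsetl _ _ _))).
rewrite Lprob_Dlevel_succ_cap Lprob_exp1_even_level_dfactor // eqxx.
by rewrite mulr_gt0 // divr_gt0 // ltr0n muln_gt0.
Qed.

Local Notation Dhistory n s := [set w | forall i, (i <= n)%N -> Dseq X i w = s i].

Definition history_level (s : nat -> R) i :=
  if i is j.+1 then even_level (dfactor (s j)) (s i) else even_level 1 (s 0%N).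

Lemma Dhistory_cylinder n s : Dhistory n s = cylinder (iota 0 n.+1) (history_level s).
Proof.
suff iff_levels w : (forall i, (i <= n)%N -> D i w = s i) <->
    (forall i, (i <= n)%N -> history_level s i (X i w)).
  apply/seteqP; split => w h.
  - by move=> i; rewrite mem_iota leq0n add0n ltnS /=; exact: (proj1 (iff_levels w) h i).
  - by apply/iff_levels => i ilen; apply: h; rewrite mem_iota leq0n add0n ltnS /=.
elim: n => [|n IH].
  split => h i; rewrite leqn0 => /eqP ->; have := h 0%N (leqnn 0);
    by rewrite /history_level /even_level /= mul1r.
split => h i; rewrite leq_eqVlt ltnS => /orP[/eqP ->|ilen].
- by rewrite /= -(h n (leqnSn n)); exact: (h n.+1 (leqnn _)).
- by apply: (proj1 IH) i ilen => j jn; apply: h; exact: leqW.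
- have hn := proj2 IH (fun j jn => h j (leqW jn)).
  by rewrite Dseq_succ (hn n (leqnn n)); exact: (h n.+1 (leqnn _)).
- by apply: (proj2 IH) i ilen => j jn; apply: h; exact: leqW.
Qed.

Lemma Lmeasurable_Dhistory n s : Lmeasurable (Dhistory n s).
Proof.
rewrite Dhistory_cylinder; apply: Lmeasurable_cylinder => -[|i] _;
  exact: measurable_even_level.
Qed.

Lemma markov_Dseq : markov_chain D.
Proof.
move=> n s Hpos.
have Pn : 0 < P (Dlevel n (s n)).
  apply: (lt_le_trans Hpos); apply: Lprob_le (Lmeasurable_Dhistory n s) (Lmeasurable_Dlevel _ _) _.
  by move=> w /(_ n (leqnn n)).
rewrite Lcond_Dlevel_succ // /Lcond.
have -> : Dlevel n.+1 (s n.+1) `&` Dhistory n s =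
          X n.+1 @^-1` history_level s n.+1 `&` Dhistory n s.
  apply/seteqP; split => w [h1 h2]; split => //.
    by rewrite /= -(h2 n (leqnn n)); exact: h1.
  by change (D n.+1 w = s n.+1); rewrite Dseq_succ (h2 n (leqnn n)); exact: h1.
rewrite Dhistory_cylinder Lprob_preimage_cylinder ?iota_uniq ?mem_iota ?ltnn ?andbF //.
- by rewrite mulfK // -Dhistory_cylinder gt_eqF.
- exact: measurable_even_level.
- by move=> -[|i] _; exact: measurable_even_level.
Qed.

Lemma time_homogeneous_Dseq : time_homogeneous D.
Proof.
move=> n m a b Pn Pm; rewrite !Lcond_Dlevel_succ //.
exact: exp1_Lprob_even_level.
Qed.

End EvenChain.

Theorem lemma3p1 (R : realType) (X : nat -> R -> R)
  (Xrv : forall i, rv (X i))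
  (Xind : indep_rvs X)
  (Xexp : forall i, exp1_distributed (X i)) :
  markov_chain (Dseq X) /\ time_homogeneous (Dseq X) /\
  (forall k : nat, (0 < k)%N ->
     Lprob [set w | Dseq X 0 w = (2 * k)%:R] =
       2 / (((2 * k)%:R - 1) * ((2 * k)%:R + 1))) /\
  (forall (n k l : nat), (0 < k)%N -> (k <= l)%N ->
     Lcond [set w | Dseq X n.+1 w = (2 * l)%:R] [set w | Dseq X n w = (2 * k)%:R] =
       (if l == k then 1 / (2 * k)%:R
        else ((2 * k)%:R - 1) * ((2 * k)%:R + 1) /
             (k%:R * ((2 * l)%:R - 1) * ((2 * l)%:R + 1)))).
Proof.
split; first exact: markov_Dseq Xrv Xind Xexp.
split; first exact: time_homogeneous_Dseq Xrv Xind Xexp.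
split=> [k k0|n k l k0 kl].
  by rewrite Dlevel0 Lprob_exp1_even_level_init.
rewrite Lcond_Dlevel_succ //; last exact: Lprob_Dlevel_gt0.
exact: Lprob_exp1_even_level_dfactor.
Qed.
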